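(* For a restless bandit as in the context, every $i\in N$ and $S\subseteq N^{\{0,1\}}$: $$b^{S\cup\{j\}}_i=b^S_i+w^S_j\,x^{1,S\cup\{j\}}_{ij},\quad j\in N^{\{0,1\}}\setminus S;\qquad b^S_i=b^{S\setminus\{j\}}_i+w^S_j\,x^{0,S\setminus\{j\}}_{ij},\quad j\in S.$$
   Context: Restless bandit: finite state space $N=N^{\{0,1\}}\cup N^{\{1\}}$ (disjoint); actions $a\in\{0,1\}$; transition probabilities $p^a_{ij}$ with $p^1_{ij}=p^0_{ij}$ for $i\in N^{\{1\}}$; discount factor $\beta\in(0,1)$; activity weights $\theta^1_j>0$. Stationary policies $u:N\to[0,1]$ with $u(i)=1$ on $N^{\{1\}}$. $b^u_i=E^u_i[\sum_{t\ge0}\theta^1_{X(t)}a(t)\beta^t]$, $x^{a,u}_{ij}=E^u_i[\sum_{t\ge0}1\{X(t)=j,a(t)=a\}\beta^t]$. For $S\subseteq N^{\{0,1\}}$ the $S$-active policy is active on $S\cup N^{\{1\}}$ and passive elsewhere; superscript $S$ denotes its measures. Marginal workloads: $w^S_i=\theta^1_i1\{i\in N^{\{0,1\}}\}+\beta\sum_{j}(p^1_{ij}-p^0_{ij})b^S_j$. *)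

From HB Require Import structures.
From mathcomp Require Import all_boot all_order all_algebra.
From mathcomp Require Import all_classical all_reals all_analysis.
Set Implicit Arguments. Unset Strict Implicit. Unset Printing Implicit Defensive.
Import Order.TTheory GRing.Theory Num.Theory numFieldNormedType.Exports.
Local Open Scope ring_scope.

(* Restless bandit project:
   - finite state space T (= N); N1 : {set T} is N^{1}; N^{0,1} = ~: N1;
   - actions a : bool (true = active = 1, false = passive = 0);
   - p a i j = p^a_{ij}; beta = discount factor; theta j = theta^1_j. *)

Section Bandit.
Variables (R : realType) (T : finType).
Variables (N1 : {set T}) (p : bool -> T -> T -> R) (beta : R) (theta : T -> R).

Definition active_set (S : {set T}) : {set T} := S :|: N1.

Definition act (S : {set T}) (i : T) : bool := i \in active_set S.

Fixpoint Pt (S : {set T}) (t : nat) (i j : T) : R :=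
  match t with
  | 0 => (i == j)%:R
  | t'.+1 => \sum_(k : T) Pt S t' i k * p (act S k) k j
  end.

(* x^{a,S}_{ij} = E^S_i [ sum_t 1{X(t)=j, a(t)=a} beta^t ]
               = sum_t beta^t P^S_i(X(t)=j) 1{a^S(j) = a} *)
Definition xm (a : bool) (S : {set T}) (i j : T) : R :=
  limn (series (fun t : nat => beta ^+ t * Pt S t i j * (act S j == a)%:R)).

(* b^S_i = E^S_i [ sum_t theta^1_{X(t)} a(t) beta^t ] *)
Definition bm (S : {set T}) (i : T) : R :=
  limn (series (fun t : nat =>
    beta ^+ t * \sum_(j : T) Pt S t i j * theta j * (act S j)%:R)).

Definition wm (S : {set T}) (i : T) : R :=
  theta i * (i \notin N1)%:R + beta * \sum_(j : T) (p true i j - p false i j) * bm S j.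

End Bandit.

Definition bandit_model (R : realType) (T : finType) (N1 : {set T})
    (p : bool -> T -> T -> R) (beta : R) (theta : T -> R) : Prop :=
  [/\ forall a i j, 0 <= p a i j,
      forall a i, \sum_(j : T) p a i j = 1,
      forall i j, i \in N1 -> p true i j = p false i j,
      0 < beta < 1 &
      forall j, 0 < theta j].

From HB Require Import structures.
From mathcomp Require Import all_boot all_order all_algebra.
From mathcomp Require Import all_classical all_reals all_analysis.
From mathcomp Require Import ring lra.
Set Implicit Arguments. Unset Strict Implicit. Unset Printing Implicit Defensive.
Import Order.TTheory GRing.Theory Num.Theory numFieldNormedType.Exports.
Local Open Scope classical_set_scope.
Local Open Scope ring_scope.

(* Both [b^S] and [x^{a,S}_{.j}] are discounted values of rewards under the
   S-active policy, hence the unique solutions of their Bellman equations: the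
   Bellman operator is a beta-contraction for the sup norm.  If a policy is
   changed at the single state j only, then [b^S + d * x_{.j}], with [x_{.j}]
   taken under the new policy, solves the Bellman equation of the new policy as
   soon as d is the one-step advantage at j of the new action over the old one,
   evaluated with [b^S].  Activating resp. deactivating j gives [d = w^S_j]
   resp. [d = - w^S_j]. *)

Section DiscountedValue.
Variables (R : realType) (T : finType) (N1 : {set T}).
Variables (p : bool -> T -> T -> R) (beta : R).
Hypothesis p_ge0 : forall a i j, 0 <= p a i j.
Hypothesis p_sum1 : forall a i, \sum_j p a i j = 1.
Hypothesis beta_ge0 : 0 <= beta.
Hypothesis beta_lt1 : beta < 1.

Local Notation Pt := (Pt N1 p).
Local Notation act := (act N1).

Lemma PtSl S t i j : Pt S t.+1 i j = \sum_k p (act S i) i k * Pt S t k j.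
Proof.
elim: t i j => [|t IHt] i j.
  rewrite /= (bigD1 i) //= eqxx mul1r big1 ?addr0 => [|k /negbTE]; last first.
    by rewrite eq_sym => ->; rewrite mul0r.
  rewrite (bigD1 j) //= eqxx mulr1 big1 ?addr0 // => k /negbTE ->.
  by rewrite mulr0.
transitivity (\sum_k Pt S t.+1 i k * p (act S k) k j) => //.
under eq_bigr do rewrite IHt mulr_suml.
rewrite exchange_big; apply: eq_bigr => k _ /=.
by rewrite mulr_sumr; apply: eq_bigr => l _; rewrite mulrA.
Qed.

Lemma Pt_ge0 S t i j : 0 <= Pt S t i j.
Proof.
elim: t i j => [|t IHt] i j /=; first by rewrite ler0n.
by apply: sumr_ge0 => k _; apply: mulr_ge0.
Qed.

Lemma Pt_sum1 S t i : \sum_j Pt S t i j = 1.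
Proof.
elim: t i => [|t IHt] i /=.
  by rewrite (bigD1 i) //= eqxx big1 ?addr0 // => k; rewrite eq_sym => /negbTE ->.
rewrite exchange_big /= -[RHS](IHt i); apply: eq_bigr => k _.
by rewrite -mulr_sumr p_sum1 mulr1.
Qed.

Lemma Pt_le1 S t i j : Pt S t i j <= 1.
Proof.
rewrite -(Pt_sum1 S t i) (bigD1 j) //= lerDl.
by apply: sumr_ge0 => k _; apply: Pt_ge0.
Qed.

Definition discounted S (f : T -> R) i t := beta ^+ t * \sum_k Pt S t i k * f k.

Definition value S f i := limn (series (discounted S f i)).

Lemma discounted0 S f i : discounted S f i 0 = f i.
Proof.
rewrite /discounted expr0 mul1r /= (bigD1 i) //= eqxx mul1r big1 ?addr0 //.
by move=> k /negbTE; rewrite eq_sym => ->; rewrite mul0r.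
Qed.

Lemma discountedS S f i t :
  discounted S f i t.+1 = beta * \sum_k p (act S i) i k * discounted S f k t.
Proof.
rewrite /discounted exprS -mulrA; congr (_ * _).
under eq_bigr do rewrite PtSl mulr_suml.
rewrite exchange_big mulr_sumr; apply: eq_bigr => k _ /=.
rewrite mulrCA !mulr_sumr; apply: eq_bigr => l _.
by rewrite !mulrA.
Qed.

Lemma series_discountedS S f i n :
  series (discounted S f i) n.+1 =
  f i + beta * \sum_k p (act S i) i k * series (discounted S f k) n.
Proof.
rewrite /series /= big_nat_recl // discounted0; congr (_ + _).
under eq_bigr do rewrite discountedS.
rewrite -mulr_sumr exchange_big /=; congr (_ * _); apply: eq_bigr => k _.
by rewrite mulr_sumr.
Qed.

Lemma is_cvg_value S f i : cvgn (series (discounted S f i)).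
Proof.
apply: normed_cvg.
apply: (@series_le_cvg _ _ (geometric (\sum_k `|f k|) beta)) => [n|n|n|].
- exact: normr_ge0.
- by apply: mulr_ge0; [apply: sumr_ge0 => k _|apply: exprn_ge0].
- rewrite /= /discounted /geometric normrM ger0_norm ?exprn_ge0 // mulrC.
  apply: ler_wpM2r; first exact: exprn_ge0.
  apply: le_trans (ler_norm_sum _ _ _) _; apply: ler_sum => k _.
  rewrite normrM ger0_norm ?Pt_ge0 // ler_piMl ?Pt_le1 //.
- by apply: is_cvg_geometric_series; rewrite ger0_norm.
Qed.

Lemma valueE S f i :
  value S f i = f i + beta * \sum_k p (act S i) i k * value S f k.
Proof.
suff : series (discounted S f i) n.+1 @[n --> \oo] -->
       f i + beta * \sum_k p (act S i) i k * value S f k.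
  by rewrite cvg_shiftS => /cvg_lim; apply.
under eq_cvg do rewrite series_discountedS.
apply: cvgD; first exact: cvg_cst.
apply: cvgMl_tmp; apply: (cvg_big add_continuous) => k _.
by apply: cvgMl_tmp; apply: is_cvg_value.
Qed.

Lemma bellman_homogeneous_eq0 S (d : T -> R) :
  (forall k, d k = beta * \sum_l p (act S k) k l * d l) -> d =1 0.
Proof.
move=> dE k0; pose M : R := \big[Num.max/0]_l `|d l|.
have le_dM k : `|d k| <= M by apply: le_bigmax.
have M_ge0 : (0 : R) <= M by apply: le_trans (le_dM k0).
suff M_le0 : M <= 0.
  by apply/normr0_eq0/le_anti; rewrite normr_ge0 andbT (le_trans (le_dM k0)).
suff : (1 - beta) * M <= 0 by rewrite pmulr_rle0 // subr_gt0.
rewrite mulrBl mul1r subr_le0.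
rewrite {1}/M; apply: bigmax_le => [|k _]; first by apply: mulr_ge0.
rewrite dE normrM ger0_norm // ler_wpM2l //.
apply: le_trans (ler_norm_sum _ _ _) _.
rewrite -[M]mul1r -(p_sum1 (act S k) k) mulr_suml ler_sum // => l _.
by rewrite normrM ger0_norm // ler_wpM2l.
Qed.

Lemma bellman_uniq S (g u v : T -> R) :
  (forall k, u k = g k + beta * \sum_l p (act S k) k l * u l) ->
  (forall k, v k = g k + beta * \sum_l p (act S k) k l * v l) ->
  u =1 v.
Proof.
move=> uE vE k; apply/subr0_eq.
apply: (@bellman_homogeneous_eq0 S (fun k => u k - v k)) => {}k.
rewrite {1}uE {1}vE opprD addrACA subrr add0r -mulrBr -sumrB.
by under [in RHS]eq_bigr do rewrite mulrBr.
Qed.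

Lemma value_switch S S' j (f f' : T -> R) :
  (forall k, k != j -> act S' k = act S k) ->
  (forall k, k != j -> f' k = f k) ->
  forall i, value S' f' i =
    value S f i
    + (f' j - f j + beta * \sum_l (p (act S' j) j l - p (act S j) j l) * value S f l)
      * value S' (fun k => (k == j)%:R) i.
Proof.
move=> actE fE; apply: (@bellman_uniq S' f') => k; first exact: valueE.
rewrite [value S f k]valueE [value S' _ k]valueE.
under [in RHS]eq_bigr do rewrite mulrDr mulrCA.
rewrite big_split -mulr_sumr /=.
have [->|kj] := eqVneq k j.
  under [X in _ - f j + beta * X]eq_bigr do rewrite mulrBl.
  by rewrite sumrB /=; ring.
by rewrite (fE k kj) (actE k kj) /=; ring.
Qed.

Variable theta : T -> R.

Local Notation bm := (bm N1 p beta theta).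
Local Notation xm := (xm N1 p beta).
Local Notation wm := (wm N1 p beta theta).

Lemma bm_value S : bm S =1 value S (fun k => theta k * (act S k)%:R).
Proof.
move=> i; congr (limn (series _)); apply/funext => t.
by congr (_ * _); apply: eq_bigr => k _; rewrite mulrA.
Qed.

Lemma xm_value S i j : xm (act S j) S i j = value S (fun k => (k == j)%:R) i.
Proof.
rewrite /xm eqxx; congr (limn (series _)); apply/funext => t.
rewrite mulr1; congr (_ * _).
by rewrite (bigD1 j) //= eqxx mulr1 big1 ?addr0 // => k /negbTE ->; rewrite mulr0.
Qed.

Lemma bm_switch S S' j i :
  (forall k, k != j -> act S' k = act S k) -> act S j = ~~ act S' j -> j \notin N1 ->
  bm S' i = bm S i + (-1) ^+ (~~ act S' j) * wm S j * xm (act S' j) S' i j.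
Proof.
move=> actE actj jN1; rewrite xm_value !bm_value.
rewrite (value_switch (f := fun k => theta k * (act S k)%:R) actE) => [|k kj]; last by rewrite actE.
rewrite /wm jN1 -bm_value; congr (_ + _ * _).
under eq_bigr do rewrite -bm_value.
case: (act S' j) actj => -> /=; first ring.
under eq_bigr do rewrite -opprB mulNr.
by rewrite sumrN; ring.
Qed.

End DiscountedValue.

Theorem corollary1 (R : realType) (T : finType) (N1 : {set T})
    (p : bool -> T -> T -> R) (beta : R) (theta : T -> R) :
  bandit_model N1 p beta theta ->
  forall (i : T) (S : {set T}), S \subset ~: N1 ->
    (forall j, j \in ~: N1 -> j \notin S ->
       bm N1 p beta theta (j |: S) i
       = bm N1 p beta theta S i
         + wm N1 p beta theta S j * xm N1 p beta true (j |: S) i j) /\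
    (forall j, j \in S ->
       bm N1 p beta theta S i
       = bm N1 p beta theta (S :\ j) i
         + wm N1 p beta theta S j * xm N1 p beta false (S :\ j) i j).
Proof.
case=> p_ge0 p_sum1 _ /andP[beta_gt0 beta_lt1] _ i S /fintype.subsetP SN1.
have switch := bm_switch (N1 := N1) p_ge0 p_sum1 (ltW beta_gt0) beta_lt1 theta.
split=> [j | j jS].
  rewrite inE => jN1 jS.
  have actj : act N1 (j |: S) j by rewrite /act /active_set !inE eqxx.
  rewrite (switch S _ j) ?actj ?mul1r // => [k kj|].
    by rewrite /act /active_set !inE (negbTE kj).
  by rewrite /act /active_set inE (negbTE jS) (negbTE jN1).
have jN1 : j \notin N1 by have := SN1 j jS; rewrite inE.
have actj : act N1 (S :\ j) j = false.
  by rewrite /act /active_set !inE eqxx (negbTE jN1).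
rewrite (switch S (S :\ j) j) ?actj ?mulN1r ?mulNr ?addrNK // => [k kj|].
  by rewrite /act /active_set !inE kj.
by rewrite /act /active_set inE jS.
Qed.
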